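(* Consider the Axelrod model with $F$ features and $q$ states on the path with vertex set $\{0,1,\dots,N\}$ (so $N$ edges), started with all initial features i.i.d. uniform on $\{1,\dots,q\}$, and the coupled urn process $(B_0(t),\dots,B_F(t))$ defined below. Then almost surely, for all $t\ge0$, $$B_0(t)\le w_0(t).$$
   Context: For an edge $e=\{x,y\}$, $\bar X_t(e)=\sum_{i=1}^F\mathbf 1\{X_t^i(x)=X_t^i(y)\}$, $w_j(t)=\#\{e:\bar X_t(e)=j\}$, and the total number of agreements is $W(t)=\sum_{j=0}^F j\,w_j(t)$. Axelrod dynamics: for each ordered pair $(x,y)$ of adjacent vertices with $X(x)\ne X(y)$, at rate $F(x,y)/2$ (with $F(x,y)=\bar X(\{x,y\})/F$) vertex $x$ copies from $y$ one feature chosen uniformly among those on which they differ; each such update changes $W$ by $0$, $1$ or $2$. Urn process: there are $F+1$ boxes labelled $0,\dots,F$ with $B_j(0)=w_j(0)$ balls in box $j$. At each time $t$ at which the Axelrod model is updated: if $W(t)-W(t-)\le1$, nothing is done; if $W(t)-W(t-)=2$, a box $j$ is chosen uniformly at random among the nonempty boxes with $1\le j\le F-1$ (if there is one) and one ball is moved from box $j$ to box $j+1$; in case a ball has been so moved, additionally one ball is moved from box $0$ to box $1$ if box $0$ is nonempty. The urn stops when the Axelrod model reaches an absorbing state. *)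

From mathcomp Require Import all_boot.
Set Implicit Arguments. Unset Strict Implicit. Unset Printing Implicit Defensive.

(* A configuration: vertex x in {0..N} ('I_N.+1) has F features, each taking
   one of q states (states encoded as 'I_q, i.e. {0..q-1} instead of {1..q}). *)
Definition config (N F q : nat) := {ffun 'I_N.+1 -> {ffun 'I_F -> 'I_q}}.

Definition agreev N F q (X : config N F q) (x y : 'I_N.+1) : nat :=
  #|[pred k : 'I_F | X x k == X y k]|.

(* the i-th edge of the path (i : 'I_N) is {i, i+1} *)
Definition eleft N (i : 'I_N) : 'I_N.+1 := widen_ord (leqnSn N) i.
Definition eright N (i : 'I_N) : 'I_N.+1 := lift ord0 i.

Definition agree N F q (X : config N F q) (i : 'I_N) : nat :=
  agreev X (eleft i) (eright i).

Definition w N F q (X : config N F q) (j : nat) : nat :=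
  #|[pred i : 'I_N | agree X i == j]|.

(* W = total number of agreements = sum_j j w_j *)
Definition Wtot N F q (X : config N F q) : nat := \sum_(i < N) agree X i.

Definition adj N (x y : 'I_N.+1) : bool :=
  ((x : nat).+1 == y) || ((y : nat).+1 == x).

Definition copy_feature N F q (X : config N F q) (x y : 'I_N.+1) (k : 'I_F)
  : config N F q :=
  [ffun z => if z == x then [ffun l => if l == k then X y k else X x l]
             else X z].

(* One Axelrod update that happens with positive rate: x, y adjacent,
   X(x) <> X(y), rate F(x,y)/2 > 0 (i.e. at least one agreement), and x copies
   from y one feature k on which they differ. *)
Definition axelrod_step N F q (X X' : config N F q) : Prop :=
  exists (x y : 'I_N.+1) (k : 'I_F),
    [/\ adj x y, X x != X y, 0 < agreev X x y, X x k != X y k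
      & X' = copy_feature X x y k].

(* urn contents: B j = number of balls in box j (boxes 0..F) *)
Definition move_ball (B : nat -> nat) (j : nat) : nat -> nat :=
  fun i => if i == j then B i - 1 else if i == j.+1 then B i + 1 else B i.

Definition urn_step (F : nat) (WX WX' : nat) (B B' : nat -> nat) : Prop :=
  if WX' == WX + 2 then
    ((forall j, 1 <= j <= F.-1 -> B j = 0) /\ B' = B) \/
    (exists j, [/\ 1 <= j <= F.-1, 0 < B j &
       B' = (let B1 := move_ball B j in
             if 0 < B1 0 then move_ball B1 0 else B1)])
  else B' = B.

From mathcomp Require Import all_boot.
From mathcomp Require Import zify.
Set Implicit Arguments. Unset Strict Implicit. Unset Printing Implicit Defensive.

(* The urn always holds N balls, one per edge, and its weight sum_j j B_j never
   exceeds the number W of agreements.  An Axelrod update copies a feature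
   across an edge whose agreement lies strictly between 0 and F: that edge
   gains one agreement, and the only other edge that can change is the second
   edge at the copying vertex, whose agreement moves by at most one.  So W never
   decreases, and w_0 can drop (by one) only when W jumps by 2, which is exactly
   when the urn may take a ball out of box 0.  If at such a jump all boxes
   1..F-1 are empty and B_0 = w_0, the urn weight would be F (N - w_0), which is
   larger than W because some edge has agreement strictly below F; hence
   B_0 < w_0 before the jump. *)

Lemma sum_ord_delta n (c : nat -> nat) j :
  j < n -> \sum_(i < n) c i * (i == j :> nat) = c j.
Proof.
move=> ltjn; have := big_ord1_eq addn c j n; rewrite ltjn big_mkcond /= => <-.
by apply: eq_bigr => i _; case: eqP => _; rewrite /= ?muln0 ?muln1.
Qed.

Lemma card_pred_sum (T : finType) (P : pred T) : #|P| = \sum_(t : T) P t.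
Proof.
by rewrite -sum1_card big_mkcond; apply: eq_bigr => t _; rewrite unfold_in; case: (P t).
Qed.

Lemma sum_card_fibers (I : finType) (f : I -> nat) (c : nat -> nat) n :
    (forall i, f i < n) ->
  \sum_(j < n) c j * #|[pred i | f i == j]| = \sum_i c (f i).
Proof.
move=> ltfn; rewrite [LHS](eq_bigr (fun j : 'I_n => \sum_i c j * (f i == j :> nat)));
  last by move=> j _; rewrite card_pred_sum big_distrr.
rewrite exchange_big /=; apply: eq_bigr => i _.
by rewrite -(sum_ord_delta c (ltfn i)); apply: eq_bigr => j _; rewrite eq_sym.
Qed.

Lemma sum_lt_card_support (I : finType) (f : I -> nat) (F : nat) (e : I) :
    (forall i, f i <= F) -> 0 < f e < F ->
  \sum_i f i < F * #|[pred i | f i != 0]|.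
Proof.
move=> lefF /andP[fe_gt0 fe_ltF].
rewrite mulnC -sum_nat_const (bigID [pred i | f i != 0]) /= [X in _ + X]big1 => [|i];
  last by rewrite negbK => /eqP.
have fe_supp : f e != 0 by rewrite -lt0n.
rewrite addn0 (bigD1 e) // [X in _ < X](bigD1 e) ?inE //= -addSn leq_add //.
exact: leq_sum.
Qed.

Lemma card_predD1_off_point (T : finType) (P Q : pred T) (k : T) :
  (forall l, l != k -> P l = Q l) -> #|[predD1 P & k]| = #|[predD1 Q & k]|.
Proof. by move=> PQ; apply: eq_card => l; rewrite !inE; case: eqP => //= /eqP /PQ. Qed.

Lemma card_le_off_point (T : finType) (P Q : pred T) (k : T) :
  (forall l, l != k -> P l = Q l) -> #|P| <= #|Q|.+1.
Proof.
move=> /card_predD1_off_point PQ.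
by rewrite (cardD1 k P) (cardD1 k Q) PQ -add1n addnA leq_add2r; case: (k \in P).
Qed.

Lemma card_add_point (T : finType) (P Q : pred T) (k : T) :
  (forall l, l != k -> Q l = P l) -> k \notin P -> k \in Q -> #|Q| = #|P|.+1.
Proof.
move=> /card_predD1_off_point QP Pk Qk.
by rewrite (cardD1 k Q) (cardD1 k P) QP Qk (negbTE Pk).
Qed.

Section LocalChange.

Variables (I : finType) (f g : I -> nat) (e e' : I).
Hypotheses (g_off : forall i, i != e -> i != e' -> g i = f i)
  (g_e : g e = (f e).+1) (f_e_gt0 : 0 < f e)
  (g_e'_le : g e' <= (f e').+1) (f_e'_le : f e' <= (g e').+1).

Lemma sum_local_change_at_one : e' = e -> \sum_i g i = (\sum_i f i).+1.
Proof.
move=> e'e; rewrite (bigD1 e) // [in RHS](bigD1 e) //= g_e; congr (_ + _).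
by apply: eq_bigr => i ie; rewrite g_off // e'e.
Qed.

Lemma sum_local_change_at_two :
  e' != e -> \sum_i g i + f e' = (\sum_i f i).+1 + g e'.
Proof.
move=> e'e; rewrite (bigD1 e) // [in RHS](bigD1 e) //= (bigD1 e') //.
rewrite [in RHS](bigD1 e') //= g_e.
rewrite (eq_bigr f) => [|i /andP[ie ie']]; last exact: g_off.
lia.
Qed.

Lemma leq_sum_local : \sum_i f i <= \sum_i g i.
Proof.
have [e'e|e'e] := eqVneq e' e; first by rewrite sum_local_change_at_one.
have := sum_local_change_at_two e'e; lia.
Qed.

Lemma card_zeros_local :
  #|[pred i | f i == 0]| <= #|[pred i | g i == 0]| + (\sum_i g i == \sum_i f i + 2).
Proof.
have f_e_neq0 i : f i = 0 -> i != e.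
  by move=> fi0; apply: contraTneq f_e_gt0 => <-; rewrite fi0.
have [/andP[/eqP f_e'0 g_e'_neq0] | g_e'_stays] := boolP ((f e' == 0) && (g e' != 0)).
  have e'e := f_e_neq0 _ f_e'0.
  have -> : \sum_i g i == \sum_i f i + 2.
    by have := sum_local_change_at_two e'e; move: g_e'_le g_e'_neq0; rewrite f_e'0; lia.
  apply: (@leq_trans #|[predU1 e' & [pred i | g i == 0]]|).
    apply: subset_leq_card; apply/subsetP => i; rewrite !inE => /eqP fi0.
      by have [//|ie'] := eqVneq i e'; rewrite g_off ?fi0 ?f_e_neq0.
  by rewrite cardU1 inE g_e'_neq0 addnC.
rewrite (leq_trans _ (leq_addr _ _)) // subset_leq_card //; apply/subsetP => i.
rewrite !inE => /eqP fi0; have [ie'|ie'] := eqVneq i e'.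
  by move: g_e'_stays; rewrite -ie' fi0 /= negbK.
by rewrite g_off ?fi0 ?f_e_neq0.
Qed.

End LocalChange.

Definition incident N (x : 'I_N.+1) (i : 'I_N) : bool :=
  (eleft i == x) || (eright i == x).

Lemma incidentE N (x : 'I_N.+1) (i : 'I_N) :
  incident x i = ((i : nat) == x) || ((i : nat).+1 == x).
Proof. by []. Qed.

Lemma agreev_sym N F q (X : config N F q) a b : agreev X a b = agreev X b a.
Proof. by apply: eq_card => l; rewrite !inE eq_sym. Qed.

Lemma agreev_le N F q (X : config N F q) a b : agreev X a b <= F.
Proof. by rewrite /agreev (leq_trans (max_card _)) ?card_ord. Qed.

Lemma adj_neq N (x y : 'I_N.+1) : adj x y -> y != x.
Proof. by rewrite -val_eqE /adj => /orP[] /eqP; rewrite /=; lia. Qed.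

Lemma agree_edge_of_adj N (x y : 'I_N.+1) : adj x y ->
  exists2 e, incident x e & forall F q (X : config N F q), agree X e = agreev X x y.
Proof.
case/orP => /eqP xy.
  have ltxN : (x : nat) < N by rewrite -ltnS xy ltn_ord.
  have [l r] : eleft (Ordinal ltxN) = x /\ eright (Ordinal ltxN) = y.
    by split; apply: val_inj; rewrite //= /bump /= add1n.
  by exists (Ordinal ltxN) => [|F q X]; rewrite /incident /agree l r ?eqxx.
have ltyN : (y : nat) < N by rewrite -ltnS xy ltn_ord.
have [l r] : eleft (Ordinal ltyN) = y /\ eright (Ordinal ltyN) = x.
  by split; apply: val_inj; rewrite //= /bump /= add1n.
exists (Ordinal ltyN) => [|F q X]; first by rewrite /incident r eqxx orbT.
by rewrite /agree l r agreev_sym.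
Qed.

Lemma exists_other_incident N (x : 'I_N.+1) (e : 'I_N) : incident x e ->
  exists e' : 'I_N, forall i, i != e -> i != e' -> ~~ incident x i.
Proof.
move=> xe; case: (pickP [pred i | incident x i && (i != e)]) => [e' /andP[xe' e'e]|none].
  exists e' => i ie ie'; apply/negP => xi.
  move: xi xe xe' e'e ie ie'; rewrite !incidentE -!val_eqE /=; lia.
by exists e => i ie _; apply/negP => xi; move: (none i); rewrite /= xi ie.
Qed.

Section CopyFeature.

Variables (N F q : nat) (X : config N F q) (x y : 'I_N.+1) (k : 'I_F).
Let X' := copy_feature X x y k.

Lemma copy_feature_off z l : (z != x) || (l != k) -> X' z l = X z l.
Proof. by rewrite /X' !ffunE; case: eqP => [-> /= lk|//]; rewrite ffunE (negbTE lk). Qed.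

Lemma agreev_copy_off a b : a != x -> b != x -> agreev X' a b = agreev X a b.
Proof. by move=> ax bx; apply: eq_card => l; rewrite !inE !copy_feature_off ?ax ?bx. Qed.

Lemma agreev_copy_le a b : agreev X' a b <= (agreev X a b).+1.
Proof.
by apply: (@card_le_off_point _ _ _ k) => l lk; rewrite !inE !copy_feature_off ?lk ?orbT.
Qed.

Lemma agreev_copy_ge a b : agreev X a b <= (agreev X' a b).+1.
Proof.
by apply: (@card_le_off_point _ _ _ k) => l lk; rewrite !inE !copy_feature_off ?lk ?orbT.
Qed.

Lemma agreev_copy_gain :
  y != x -> X x k != X y k -> agreev X' x y = (agreev X x y).+1.
Proof.
move=> yx xyk; apply: (@card_add_point _ _ _ k) => [l lk||]; rewrite ?inE //.
  by rewrite !copy_feature_off ?lk ?orbT.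
by rewrite (@copy_feature_off y) ?yx // /X' ffunE eqxx ffunE eqxx.
Qed.

Lemma agree_copy_off i : ~~ incident x i -> agree X' i = agree X i.
Proof. by rewrite negb_or => /andP[lx rx]; apply: agreev_copy_off. Qed.

End CopyFeature.

Section AxelrodStep.

Variables (N F q : nat) (X X' : config N F q).
Hypothesis step : axelrod_step X X'.

Lemma axelrod_step_local : exists e e' : 'I_N,
  [/\ forall i, i != e -> i != e' -> agree X' i = agree X i,
      agree X' e = (agree X e).+1, 0 < agree X e,
      agree X' e' <= (agree X e').+1 & agree X e' <= (agree X' e').+1].
Proof.
case: step => x [y [k [xy _ xy_agree xyk ->]]].
have [e xe agree_e] := agree_edge_of_adj xy.
have [e' e'_other] := exists_other_incident xe.
exists e, e'; split; rewrite ?agree_e //.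
- by move=> i ie ie'; rewrite agree_copy_off ?e'_other.
- by rewrite agreev_copy_gain ?adj_neq.
- exact: agreev_copy_le.
- exact: agreev_copy_ge.
Qed.

Lemma axelrod_step_Wtot : Wtot X <= Wtot X'.
Proof. by have [e [e' [*]]] := axelrod_step_local; apply: (@leq_sum_local _ _ _ e e'). Qed.

Lemma axelrod_step_zeros : w X 0 <= w X' 0 + (Wtot X' == Wtot X + 2).
Proof. by have [e [e' [*]]] := axelrod_step_local; apply: (@card_zeros_local _ _ _ e e'). Qed.

Lemma axelrod_step_Wtot_lt : Wtot X < F * (N - w X 0).
Proof.
have [e [_ [_ grow_e pos_e _ _]]] := axelrod_step_local.
have lt_e : agree X e < F by rewrite -ltnS -grow_e ltnS agreev_le.
have supp : w X 0 + #|[pred i | agree X i != 0]| = N.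
  by rewrite -[RHS](card_ord N) -(cardC [pred i | agree X i == 0]).
have -> : N - w X 0 = #|[pred i | agree X i != 0]| by lia.
rewrite (@sum_lt_card_support _ _ _ e) ?pos_e // => i.
exact: agreev_le.
Qed.

End AxelrodStep.

Definition nballs (F : nat) (B : nat -> nat) : nat := \sum_(j < F.+1) B j.
Definition urn_weight (F : nat) (B : nat -> nat) : nat := \sum_(j < F.+1) j * B j.

Lemma move_ballE (B : nat -> nat) j i :
  0 < B j -> move_ball B j i + (i == j) = B i + (i == j.+1).
Proof.
rewrite /move_ball; have [-> Bj_gt0|ij] := eqVneq i j.
  by rewrite (ltn_eqF (ltnSn j)) /=; lia.
by rewrite addn0; case: eqP => _ _; lia.
Qed.

Lemma sum_move_ball F (B : nat -> nat) j (c : nat -> nat) : j < F -> 0 < B j ->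
  \sum_(i < F.+1) c i * move_ball B j i + c j = \sum_(i < F.+1) c i * B i + c j.+1.
Proof.
move=> ltjF Bj_gt0.
rewrite -(@sum_ord_delta F.+1 c j) ?ltnS 1?ltnW // -(@sum_ord_delta F.+1 c j.+1) //.
by rewrite -!big_split; apply: eq_bigr => i _; rewrite /= -!mulnDr move_ballE.
Qed.

Lemma nballs_move_ball F (B : nat -> nat) j :
  j < F -> 0 < B j -> nballs F (move_ball B j) = nballs F B.
Proof.
move=> ltjF Bj_gt0; have := sum_move_ball (fun=> 1) ltjF Bj_gt0.
by rewrite /nballs !(eq_bigr _ (fun i _ => mul1n _)) => /addIn.
Qed.

Lemma urn_weight_move_ball F (B : nat -> nat) j :
  j < F -> 0 < B j -> urn_weight F (move_ball B j) = (urn_weight F B).+1.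
Proof.
by move=> ltjF Bj_gt0; have := sum_move_ball id ltjF Bj_gt0; rewrite /urn_weight; lia.
Qed.

Lemma urn_step_idle F W W' (B B' : nat -> nat) :
  W' != W + 2 -> urn_step F W W' B B' -> B' = B.
Proof. by rewrite /urn_step => /negbTE ->. Qed.

Lemma urn_step_jump F W (B B' : nat -> nat) : 0 < F -> urn_step F W (W + 2) B B' ->
  ((forall j, 1 <= j <= F.-1 -> B j = 0) /\ B' = B) \/
  [/\ nballs F B' = nballs F B, urn_weight F B' <= urn_weight F B + 2 & B' 0 = B 0 - 1].
Proof.
rewrite /urn_step eqxx => F_gt0 [mid|[j [/andP[j_gt0 jF] Bj_gt0 ->]]]; [by left | right].
have ltjF : j < F by rewrite -(prednK F_gt0).
have move0 : move_ball B j 0 = B 0 by rewrite /move_ball; case: j j_gt0 {jF ltjF Bj_gt0}.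
case: ifP => [B1_gt0|/negbT]; last first.
  rewrite move0 -eqn0Ngt => /eqP B00.
  by rewrite nballs_move_ball ?urn_weight_move_ball //; split; lia.
rewrite !nballs_move_ball // !urn_weight_move_ball // addn2.
by rewrite {1}/move_ball eqxx move0.
Qed.

Lemma urn_middle_empty F (B : nat -> nat) : 0 < F ->
    (forall j, 1 <= j <= F.-1 -> B j = 0) ->
  nballs F B = B 0 + B F /\ urn_weight F B = F * B F.
Proof.
case: F => // F _ mid.
have mid' (i : 'I_F) : B (lift ord0 (widen_ord (leqnSn F) i)) = 0.
  by rewrite mid //= /bump /= add1n ltnS ltnW.
split.
  by rewrite /nballs big_ord_recl big_ord_recr big1 => [|i _]; rewrite ?mid'.
rewrite /urn_weight big_ord_recl big_ord_recr big1 => [|i _]; last by rewrite mid' muln0.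
by rewrite /= /bump /= add1n.
Qed.

Definition urn_invariant N F q (X : config N F q) (B : nat -> nat) : Prop :=
  [/\ nballs F B = N, urn_weight F B <= Wtot X & B 0 <= w X 0].

Lemma urn_invariant_init N F q (X : config N F q) (B : nat -> nat) :
  (forall j, j <= F -> B j = w X j) -> urn_invariant X B.
Proof.
move=> BwX; have agree_lt i : agree X i < F.+1 by rewrite ltnS agreev_le.
rewrite /urn_invariant BwX //; split => //.
  rewrite /nballs (eq_bigr (fun j : 'I_F.+1 => 1 * w X j)) => [|j _];
    last by rewrite mul1n BwX // -ltnS.
  by rewrite /w (sum_card_fibers (fun=> 1) agree_lt) sum1_card card_ord.
rewrite /urn_weight (eq_bigr (fun j : 'I_F.+1 => j * w X j)) => [|j _];
  last by rewrite BwX // -ltnS.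
by rewrite /w (sum_card_fibers id agree_lt).
Qed.

Lemma urn_invariant_step N F q (X X' : config N F q) (B B' : nat -> nat) :
  0 < F -> axelrod_step X X' -> urn_step F (Wtot X) (Wtot X') B B' ->
  urn_invariant X B -> urn_invariant X' B'.
Proof.
move=> F_gt0 step ustep [nB wB B0].
have W_le := axelrod_step_Wtot step; have zeros := axelrod_step_zeros step.
have [jump|idle] := eqVneq (Wtot X') (Wtot X + 2); last first.
  move: zeros; rewrite (urn_step_idle idle ustep) (negbTE idle); split; lia.
rewrite jump eqxx in zeros; rewrite jump in ustep W_le *.
have [[mid ->]|[nB' wB' B'0]] := urn_step_jump F_gt0 ustep; last by split; lia.
have [nBm wBm] := urn_middle_empty F_gt0 mid.
have W_lt := axelrod_step_Wtot_lt step.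
have B0_lt : B 0 < w X 0.
  rewrite ltn_neqAle B0 andbT; apply/eqP => B0w.
  have BF : B F = N - w X 0 by lia.
  by move: W_lt; rewrite -BF -wBm ltnNge wB.
by split; lia.
Qed.

Theorem lemma11 (N F q : nat) (HF : 0 < F) (Hq : 0 < q)
    (X : nat -> config N F q) (B : nat -> nat -> nat) :
  (forall j, j <= F -> B 0 j = w (X 0) j) ->
  forall n : nat,
    (forall m, m < n ->
       axelrod_step (X m) (X m.+1) /\
       urn_step F (Wtot (X m)) (Wtot (X m.+1)) (B m) (B m.+1)) ->
    B n 0 <= w (X n) 0.
Proof.
move=> init n steps; suff [] : urn_invariant (X n) (B n) by [].
elim: n steps => [_|n IHn steps]; first exact: urn_invariant_init.
have [step ustep] := steps n (ltnSn n).
apply: urn_invariant_step HF step ustep (IHn _) => m ltmn.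
exact/steps/ltnW.
Qed.
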